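(* Let $t\ge4$ be an integer and consider the Markov chain $(\mu_i)_{i\ge0}$ on $\mathbb{R}$ with transition kernel $P$ such that, given $\mu_{i-1}=\mu$, the random variable $\mu_i\left(1+\mu^2/t\right)^{-1/2}$ has the Student t distribution with $t$ degrees of freedom. Let $V^2(\mu)=\mu^2+1$, let $a>\sqrt{t/(t-3)}$ and $J=[-a,a]$. Then $$PV^2(\mu)\le\begin{cases}\lambda^2V^2(\mu)&\text{for }|\mu|>a,\\ K^2&\text{for }|\mu|\le a,\end{cases}$$ where $$\lambda^2=\frac{1}{t-2}\left(\frac{2t-3}{1+a^2}+1\right),\qquad K^2=2+\frac{a^2+2}{t-2}.$$ Moreover, if $\pi$ denotes the probability distribution on $\mathbb{R}$ with density proportional to $(1+\mu^2/t)^{-t/2}$, then $\pi(V^2)=\frac{2t-3}{t-3}$.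
   Context: This chain is the $\mu$-marginal of the two-step Gibbs sampler for the posterior of $(\mu,\kappa)$ in a normal model with prior $p(\mu,\kappa)\propto\kappa^{-1}$, normalized so that the sample mean is $0$ and $s^2=t$: $\kappa_i\sim\mathrm{Gamma}(t/2,\ \text{rate } (t/2)(t+\mu_{i-1}^2))$, then $\mu_i\sim N(0,1/(\kappa_i t))$. Equivalently the transition density is $p(\mu_i\mid\mu_{i-1})\propto(1+\mu_{i-1}^2/t)^{t/2}(1+\mu_{i-1}^2/t+\mu_i^2/t)^{-(t+1)/2}$ with a proportionality constant depending only on $t$. The distribution $\pi$ is its stationary distribution. $PV^2(\mu)=\int P(\mu,dy)V^2(y)$. *)

From HB Require Import structures.
From mathcomp Require Import all_boot all_order all_algebra.
From mathcomp Require Import all_classical all_reals all_analysis.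
Set Implicit Arguments. Unset Strict Implicit. Unset Printing Implicit Defensive.
Import Order.TTheory GRing.Theory Num.Theory.
Import numFieldNormedType.Exports.
Local Open Scope classical_set_scope.
Local Open Scope ring_scope.

Section Defs.
Variable R : realType.

Definition V2 (mu : R) : R := mu ^+ 2 + 1.

Definition studt_unnorm (t : nat) (x : R) : R :=
  powR (1 + x ^+ 2 / t%:R) (- ((t%:R + 1) / 2)).

Definition studt_const (t : nat) : R :=
  fine (\int[@lebesgue_measure R]_(x in [set: R]) (studt_unnorm t x)%:E)%E.

Definition studt_pdf (t : nat) (x : R) : R := studt_unnorm t x / studt_const t.

Definition kscale (t : nat) (mu : R) : R := Num.sqrt (1 + mu ^+ 2 / t%:R).

(* transition density: mu_i / kscale t mu has Student t_t law given mu_{i-1} = mu *)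
Definition kdens (t : nat) (mu y : R) : R :=
  studt_pdf t (y / kscale t mu) / kscale t mu.

Definition PV2 (t : nat) (mu : R) : \bar R :=
  (\int[@lebesgue_measure R]_(y in [set: R]) (V2 y * kdens t mu y)%:E)%E.

Definition pi_unnorm (t : nat) (x : R) : R :=
  powR (1 + x ^+ 2 / t%:R) (- (t%:R / 2)).

Definition pi_const (t : nat) : R :=
  fine (\int[@lebesgue_measure R]_(x in [set: R]) (pi_unnorm t x)%:E)%E.

Definition pi_pdf (t : nat) (x : R) : R := pi_unnorm t x / pi_const t.

Definition piV2 (t : nat) : \bar R :=
  (\int[@lebesgue_measure R]_(x in [set: R]) (V2 x * pi_pdf t x)%:E)%E.

End Defs.

From HB Require Import structures.
From mathcomp Require Import all_boot all_order all_algebra.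
From mathcomp Require Import all_classical all_reals all_analysis.
From mathcomp Require Import ring lra measurable_realfun.
Import Order.TTheory GRing.Theory Num.Theory.
Import numFieldNormedType.Exports.

(* Write g(x) = (1 + x^2/c)^(-q) with c >= 1 and q >= 2.  The function x (1 + x^2/c)^(1-q)
   has derivative g(x) (1 - (2q-3) x^2/c) and vanishes at 0 and at infinity, hence
   c * int g = (2q-3) * int x^2 g; both integrals converge because
   (1 + x^2) g(x) <= 2c^2 / (1 + x)^2.  The Student t_t kernel is g with c = t, q = (t+1)/2 and
   the density of pi is g with c = t, q = t/2, so their second moments are t/(t-2) and
   t/(t-3).  Rescaling y = (1 + mu^2/t)^(1/2) x then gives P V^2(mu) = (t + mu^2)/(t-2) + 1
   and pi(V^2) = (2t-3)/(t-3), and the two drift bounds become rational inequalities in mu^2. *)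

Set Implicit Arguments. Unset Strict Implicit. Unset Printing Implicit Defensive.
Local Open Scope classical_set_scope.
Local Open Scope ring_scope.

Local Notation lebesgue := (@lebesgue_measure _).

Section tpow.
Variable R : realType.
Implicit Types c q p x : R.

Definition tbase c x := 1 + x ^+ 2 / c.

Definition tpow c q x := powR (tbase c x) (- q).

Definition tpow_antider c q x := x * powR (tbase c x) (1 - q).

Lemma tpow_ge0 c q x : 0 <= tpow c q x.
Proof. exact: powR_ge0. Qed.

Lemma tpowN c q x : tpow c q (- x) = tpow c q x.
Proof. by rewrite /tpow /tbase sqrrN. Qed.

Section positive_scale.
Variables c q : R.
Hypothesis c_gt0 : 0 < c.

Lemma tbase_ge1 x : 1 <= tbase c x.
Proof. by rewrite /tbase lerDl divr_ge0 ?sqr_ge0 ?ltW. Qed.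

Lemma tbase_gt0 x : 0 < tbase c x.
Proof. exact: lt_le_trans (tbase_ge1 x). Qed.

Lemma tbaseE x : tbase c x = (c + x ^+ 2) / c.
Proof. by rewrite /tbase mulrDl divff ?gt_eqF. Qed.

Lemma powR_tbase_1N x : powR (tbase c x) (1 - q) = tbase c x * tpow c q x.
Proof.
rewrite /tpow powRD ?powRr1 ?(ltW (tbase_gt0 x)) //.
by rewrite (gt_eqF (tbase_gt0 x)) implybT.
Qed.

Lemma powR_tbase_1N_le x : 2 <= q -> powR (tbase c x) (1 - q) <= (tbase c x)^-1.
Proof.
move=> q_ge2; rewrite -powR_inv1 ?(ltW (tbase_gt0 x)) //.
by apply: (ler_powR (tbase_ge1 x)); lra.
Qed.

Lemma tpow_divr s x : 0 < s -> tpow c q (x / s) = tpow (c * s ^+ 2) q x.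
Proof. by move=> s_gt0; rewrite /tpow /tbase; congr powR; field; rewrite !gt_eqF. Qed.

Lemma is_derive_tbase x : is_derive x 1 (tbase c) (2 * x / c).
Proof.
rewrite /tbase; apply: is_derive_eq.
by rewrite scaler0 !add0r mul1r scaler1 [c^-1 *: _]mulrC mulr2n !mulrDl mul1r.
Qed.

Lemma is_derive_powR_tbase p x : is_derive x 1 (fun y => powR (tbase c y) p)
  (p * powR (tbase c x) (p - 1) * (2 * x / c)).
Proof. exact: is_derive1_comp (is_derive1_powR p (tbase_gt0 x)) (is_derive_tbase x). Qed.

Lemma continuous_tpow : continuous (tpow c q).
Proof.
move=> x; apply/differentiable_continuous/derivable1_diffP.
exact: (@ex_derive _ _ _ _ _ _ _ (is_derive_powR_tbase (- q) x)).
Qed.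

Lemma is_derive_tpow_antider x : is_derive x 1 (tpow_antider c q)
  (tpow c q x * (1 - (2 * q - 3) / c * x ^+ 2)).
Proof.
have := is_deriveM (is_derive_id x 1) (is_derive_powR_tbase (1 - q) x).
move/is_derive_eq; apply.
have -> : 1 - q - 1 = - q by ring.
rewrite powR_tbase_1N /tpow /tbase /GRing.scale /=.
by set P := powR _ _; field; rewrite gt_eqF.
Qed.

Lemma derive1_tpow_antider x :
  (tpow_antider c q)^`()%classic x = tpow c q x * (1 - (2 * q - 3) / c * x ^+ 2).
Proof.
by rewrite derive1E; exact: (@derive_val _ _ _ _ _ _ _ (is_derive_tpow_antider x)).
Qed.

Lemma continuous_tpow_antider : continuous (tpow_antider c q).
Proof.
move=> x; apply/differentiable_continuous/derivable1_diffP.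
exact: (@ex_derive _ _ _ _ _ _ _ (is_derive_tpow_antider x)).
Qed.

Lemma continuous_sqr_tpow : continuous (fun x => x ^+ 2 * tpow c q x).
Proof.
move=> x; apply: (continuousM (s := fun x => x ^+ 2) (t := tpow c q)).
  by apply/differentiable_continuous/derivable1_diffP; exact: ex_derive.
exact: continuous_tpow.
Qed.

Lemma tpow_antider_cvgy : 2 <= q -> tpow_antider c q x @[x --> +oo] --> 0.
Proof.
move=> q_ge2.
apply: (@squeeze_cvgr _ _ _ _ (cst 0) (fun x => c * x^-1)); last 2 first.
- exact: cvg_cst.
- rewrite -(mulr0 c); apply: cvgMl_tmp; apply/gtr0_cvgV0; last exact: cvg_id.
  by near=> x; near: x; apply: nbhs_pinfty_gt.
near=> x.
have x_gt0 : 0 < x by near: x; apply: nbhs_pinfty_gt.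
have cx_gt0 : 0 < c + x ^+ 2 by rewrite ltr_pwDl ?sqr_ge0.
rewrite /tpow_antider /cst; apply/andP; split.
  by rewrite mulr_ge0 ?powR_ge0 ?ltW.
apply: (le_trans (ler_wpM2l (ltW x_gt0) (powR_tbase_1N_le x q_ge2))).
rewrite -subr_ge0.
have -> : c * x^-1 - x * (tbase c x)^-1 = c ^+ 2 / (x * (c + x ^+ 2)).
  by rewrite tbaseE; field; rewrite !gt_eqF.
by rewrite divr_ge0 ?sqr_ge0 ?mulr_ge0 ?ltW.
Unshelve. all: end_near. Qed.

End positive_scale.
End tpow.

Section inverse_square.
Variable R : realType.

Lemma integral_inv1p_sqr :
  (\int[lebesgue]_(x in `[0%R, +oo[) ((1 + x) ^- 2)%:E = 1 :> \bar R)%E.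
Proof.
have is_derive_F (x : R) : (-1 < x)%R ->
    is_derive x 1 (fun y => - (1 + y)^-1) ((1 + x) ^- 2).
  move=> x_gtN1; have hx : (1 + x != 0)%R by rewrite gt_eqF //; lra.
  have := is_deriveD (@is_derive_cst R R^o R^o 1 x 1) (is_derive_id x 1).
  move/(is_deriveV hx)/is_deriveN.
  by move/is_derive_eq; apply; rewrite add0r /GRing.scale /= mulr1 opprK.
have cont_F (x : R) : (-1 < x)%R -> {for x, continuous (fun y : R => - (1 + y)^-1)}.
  move=> x_gtN1; apply/differentiable_continuous/derivable1_diffP.
  exact: (@ex_derive _ _ _ _ _ _ _ (is_derive_F x x_gtN1)).
rewrite (@ge0_continuous_FTC2y _ _ (fun y => - (1 + y)^-1) 0 0).
- by rewrite addr0 invr1 EFinN oppeK add0e.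
- by move=> x x_ge0; rewrite invr_ge0 exprn_ge0 // addr_ge0.
- apply: continuous_in_subspaceT => x; rewrite inE /= in_itv /= andbT => x_ge0.
  apply/differentiable_continuous/derivable1_diffP; apply: derivableV.
    by rewrite expf_neq0 // gt_eqF //; lra.
  exact: ex_derive.
- rewrite -oppr0; apply: cvgN; apply/gtr0_cvgV0; last exact: cvg_addrl.
  near=> x; have : (0 < x)%R by near: x; apply: nbhs_pinfty_gt.
  lra.
- move=> x x_gt0; have x_gtN1 : (-1 < x)%R by lra.
  exact: (@ex_derive _ _ _ _ _ _ _ (is_derive_F x x_gtN1)).
- by apply: cvg_at_right_filter; apply: cont_F; lra.
- move=> x; rewrite in_itv /= andbT => x_gt0; rewrite derive1E.
  have x_gtN1 : (-1 < x)%R by lra.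
  exact: (@derive_val _ _ _ _ _ _ _ (is_derive_F x x_gtN1)).
Unshelve. all: end_near. Qed.

Lemma integrable_inv1p_sqr :
  lebesgue.-integrable `[0%R, +oo[ (EFin \o (fun x : R => (1 + x) ^- 2)).
Proof.
have cont (x : R) : 0 <= x -> {for x, continuous (fun y : R => (1 + y) ^- 2)}.
  move=> x_ge0; apply/differentiable_continuous/derivable1_diffP; apply: derivableV.
    by rewrite expf_neq0 // gt_eqF //; lra.
  exact: ex_derive.
apply/integrableP; split.
  apply/measurable_EFinP; apply: subspace_continuous_measurable_fun => //.
  by apply: continuous_in_subspaceT => x; rewrite inE /= in_itv /= andbT; exact: cont.
under eq_integral => x.
  rewrite inE /= in_itv /= andbT => x_ge0.
  rewrite ger0_norm; last by rewrite invr_ge0 exprn_ge0 // addr_ge0.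
  over.
by rewrite integral_inv1p_sqr ltry.
Qed.

End inverse_square.

Lemma integrableT_even (R : realType) (f : R -> R) : (forall x, 0 <= f x) ->
  continuous f -> f =1 f \o -%R ->
  lebesgue.-integrable `[0%R, +oo[ (EFin \o f) -> lebesgue.-integrable setT (EFin \o f).
Proof.
move=> f_ge0 f_cont f_even f_int; apply/integrableP; split.
  by apply/measurable_EFinP; apply: continuous_measurable_fun.
under eq_integral do rewrite gee0_abs ?lee_fin //.
rewrite ge0_symfun_integralT // -set_itvcy.
by rewrite -(fineK (integrable_fin_num _ f_int)) // -EFinM ltry.
Qed.

Section tpow_moments.
Variable R : realType.
Variables c q : R.
Hypotheses (c_ge1 : 1 <= c) (q_ge2 : 2 <= q).

Let c_gt0 : 0 < c. Proof. exact: lt_le_trans ltr01 c_ge1. Qed.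

Lemma sqr1_tpow_le x : 0 <= x ->
  (1 + x ^+ 2) * tpow c q x <= 2 * c ^+ 2 * (1 + x) ^- 2.
Proof.
move=> x_ge0.
apply: (@le_trans _ _ ((c + x ^+ 2) * tpow c q x)).
  by rewrite ler_wpM2r ?tpow_ge0 // lerD2r.
have -> : c + x ^+ 2 = c * tbase c x by rewrite (tbaseE c_gt0) mulrC divfK ?gt_eqF.
rewrite -mulrA -powR_tbase_1N //.
apply: (le_trans (ler_wpM2l (ltW c_gt0) (powR_tbase_1N_le c_gt0 x q_ge2))).
have x1_gt0 : 0 < 1 + x by lra.
have cx_gt0 : 0 < c + x ^+ 2 by rewrite ltr_pwDl ?sqr_ge0.
rewrite -subr_ge0.
have -> : 2 * c ^+ 2 * (1 + x) ^- 2 - c * (tbase c x)^-1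
    = c ^+ 2 * ((x - 1) ^+ 2 + 2 * (c - 1)) / ((1 + x) ^+ 2 * (c + x ^+ 2)).
  by rewrite (tbaseE c_gt0); field; rewrite ?mulf_neq0 ?expf_neq0 ?gt_eqF.
apply: divr_ge0; last by rewrite mulr_ge0 ?sqr_ge0 ?ltW.
by rewrite mulr_ge0 ?sqr_ge0 // addr_ge0 ?sqr_ge0 //; move: c_ge1; lra.
Qed.

Lemma integrable_tpow_dominated (f : R -> R) : continuous f ->
  (forall x, 0 <= x -> `|f x| <= (1 + x ^+ 2) * tpow c q x) ->
  lebesgue.-integrable `[0%R, +oo[ (EFin \o f).
Proof.
move=> f_cont f_le.
apply: (le_integrable _ _ _ (integrableZl _ (2 * c ^+ 2) (integrable_inv1p_sqr R))) => //.
- apply/measurable_EFinP; apply: subspace_continuous_measurable_fun => //.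
  exact: continuous_subspaceT.
- move=> x; rewrite /= in_itv /= andbT => x_ge0.
  rewrite lee_fin [X in _ <= X]ger0_norm; last first.
    by rewrite mulr_ge0 ?invr_ge0 ?exprn_ge0 ?mulr_ge0 //; move: c_ge1; lra.
  by apply: le_trans (f_le x x_ge0) _; apply: sqr1_tpow_le.
Qed.

Lemma integrable_halfline_tpow : lebesgue.-integrable `[0%R, +oo[ (EFin \o tpow c q).
Proof.
apply: integrable_tpow_dominated (continuous_tpow c_gt0) _ => x _.
by rewrite ger0_norm ?tpow_ge0 // ler_peMl ?tpow_ge0 // lerDl sqr_ge0.
Qed.

Lemma integrable_halfline_sqr_tpow :
  lebesgue.-integrable `[0%R, +oo[ (EFin \o (fun x => x ^+ 2 * tpow c q x)).
Proof.
apply: integrable_tpow_dominated (continuous_sqr_tpow c_gt0) _ => x _.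
have tpow_x_ge0 := tpow_ge0 c q x.
rewrite ger0_norm; last by rewrite mulr_ge0 // sqr_ge0.
by apply: (ler_wpM2r tpow_x_ge0); rewrite lerDr.
Qed.

Lemma integral_halfline_tpow_antider_deriv : (\int[lebesgue]_(x in `[0%R, +oo[)
  (tpow c q x * (1 - (2 * q - 3) / c * x ^+ 2))%:E = 0)%E.
Proof.
pose f x := tpow c q x * (1 - (2 * q - 3) / c * x ^+ 2).
have f_cont : continuous f.
  move=> x; apply: (continuousM (s := tpow c q)); first exact: continuous_tpow.
  by apply/differentiable_continuous/derivable1_diffP; exact: ex_derive.
have f_meas D : measurable D -> measurable_fun D (EFin \o f).
  move=> mD; apply/measurable_EFinP; apply: subspace_continuous_measurable_fun => //.
  exact: continuous_subspaceT.
have F_der x : derivable (tpow_antider c q) x 1.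
  exact: (@ex_derive _ _ _ _ _ _ _ (@is_derive_tpow_antider _ c q c_gt0 x)).
rewrite -/f (@itv_bndbnd_setU _ _ _ (BRight c)) //; last by rewrite bnd_simp ltW.
rewrite integral_setU //; last 2 first.
- by apply: f_meas; apply: measurableU.
- rewrite disj_set2E; apply/eqP/seteqP; split => x //=.
  by rewrite !in_itv /= => -[/andP[_ xc] /andP[cx _]]; lra.
rewrite integral_itv_obnd_cbnd; last exact: f_meas.
rewrite (@continuous_FTC2 _ f (tpow_antider c q) 0 c c_gt0); first last.
- by move=> x _; exact: derive1_tpow_antider.
- split => [x _ | |]; first exact: F_der.
  + by apply: cvg_at_right_filter; exact: continuous_tpow_antider.
  + by apply: cvg_at_left_filter; exact: continuous_tpow_antider.
- exact: continuous_subspaceT.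
rewrite (@le0_continuous_FTC2y _ f (tpow_antider c q) c 0).
- by rewrite /tpow_antider mul0r add0e -!EFinB subr0 subrr.
- move=> x cx; apply: mulr_ge0_le0; first exact: tpow_ge0.
  rewrite subr_le0 mulrAC ler_pdivlMr // mul1r.
  by move: c_ge1 q_ge2 cx; nra.
- by apply: continuous_in_subspaceT => x _; exact: f_cont.
- exact: tpow_antider_cvgy.
- by apply: cvg_at_right_filter; exact: continuous_tpow_antider.
- by move=> x _; exact: F_der.
- by move=> x _; exact: derive1_tpow_antider.
Qed.

Lemma integral_halfline_tpow : (\int[lebesgue]_(x in `[0%R, +oo[) (tpow c q x)%:E =
  ((2 * q - 3) / c)%:E * \int[lebesgue]_(x in `[0%R, +oo[) (x ^+ 2 * tpow c q x)%:E)%E.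
Proof.
set k := (2 * q - 3) / c.
have k_sqr_int : lebesgue.-integrable `[0%R, +oo[
    (EFin \o (fun x => k * (x ^+ 2 * tpow c q x))).
  have : lebesgue.-integrable `[0%R, +oo[ (fun x => k%:E * (x ^+ 2 * tpow c q x)%:E)%E.
    exact: integrableZl integrable_halfline_sqr_tpow.
  by apply: eq_integrable => // x _; rewrite /= EFinM.
have := integral_halfline_tpow_antider_deriv.
have tpow_kx2 x : tpow c q x * (1 - k * x ^+ 2) = tpow c q x - k * (x ^+ 2 * tpow c q x).
  by ring.
under eq_integral do rewrite tpow_kx2 EFinB.
rewrite integralB_EFin //; last exact: integrable_halfline_tpow.
under [X in (_ - X = _)%E -> _]eq_integral do rewrite EFinM.
rewrite integralZl //; last exact: integrable_halfline_sqr_tpow.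
move/eqP; rewrite sube_eq ?add0e //; first by move/eqP.
exact: integrable_fin_num integrable_halfline_tpow.
Qed.

Lemma integral_halfline_tpow_gt0 :
  (0 < \int[lebesgue]_(x in `[0%R, +oo[) (tpow c q x)%:E)%E.
Proof.
pose k := powR 2 (- q).
have k_gt0 : 0 < k by rewrite powR_gt0.
have tpow_meas (D : set R) : measurable D -> measurable_fun D (EFin \o tpow c q).
  move=> mD; apply/measurable_EFinP; apply: subspace_continuous_measurable_fun => //.
  exact: continuous_subspaceT (continuous_tpow c_gt0).
apply: (@lt_le_trans _ _ (\int[lebesgue]_(x in `[0%R, 1%R]) (cst k%:E x))%E).
  rewrite integral_cst //= lebesgue_measure_itv /= lte_fin ltr01 oppr0 adde0 mule1.
  by rewrite lte_fin.
apply: (@le_trans _ _ (\int[lebesgue]_(x in `[0%R, 1%R]) (tpow c q x)%:E)%E).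
  apply: ge0_le_integral => //; first by move=> x _; rewrite lee_fin ltW.
    exact: tpow_meas.
  move=> x; rewrite /= in_itv /= => /andP[x_ge0 x_le1].
  rewrite lee_fin /k /tpow !powRN lef_pV2 ?posrE ?powR_gt0 ?tbase_gt0 //.
  have tbase_le2 : tbase c x <= 2.
    rewrite /tbase [leRHS](_ : 2 = 1 + 1) // lerD2l ler_pdivrMr // mul1r.
    exact: le_trans (exprn_ile1 _ x_ge0 x_le1) c_ge1.
  have q_ge0 : 0 <= q by move: q_ge2; lra.
  apply: (ge0_ler_powR q_ge0) => //; rewrite nnegrE //.
  exact: ltW (tbase_gt0 c_gt0 x).
apply: ge0_subset_integral => //; first exact: tpow_meas.
- by move=> x _; rewrite lee_fin tpow_ge0.
- by move=> x /=; rewrite !in_itv /= => /andP[-> _].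
Qed.

Let tpow_even : tpow c q =1 tpow c q \o -%R.
Proof. by move=> x; rewrite /= tpowN. Qed.

Let sqr_tpow_even :
  (fun x => x ^+ 2 * tpow c q x) =1 (fun x => x ^+ 2 * tpow c q x) \o -%R.
Proof. by move=> x; rewrite /= sqrrN tpowN. Qed.

Let sqr_tpow_ge0 x : 0 <= x ^+ 2 * tpow c q x.
Proof. exact: mulr_ge0 (sqr_ge0 x) (tpow_ge0 c q x). Qed.

Lemma integrable_tpow : lebesgue.-integrable setT (EFin \o tpow c q).
Proof.
exact: integrableT_even (tpow_ge0 c q) (continuous_tpow c_gt0) tpow_even
  integrable_halfline_tpow.
Qed.

Lemma integrable_sqr_tpow :
  lebesgue.-integrable setT (EFin \o (fun x => x ^+ 2 * tpow c q x)).
Proof.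
exact: integrableT_even sqr_tpow_ge0 (continuous_sqr_tpow c_gt0) sqr_tpow_even
  integrable_halfline_sqr_tpow.
Qed.

Lemma Rintegral_tpow_gt0 : 0 < \int[lebesgue]_x tpow c q x.
Proof.
rewrite /Rintegral (ge0_symfun_integralT (tpow_ge0 c q) (continuous_tpow c_gt0) tpow_even).
rewrite -set_itvcy -(fineK (integrable_fin_num _ integrable_halfline_tpow)) //.
rewrite -EFinM /= mulr_gt0 // -lte_fin.
rewrite fineK ?(integrable_fin_num _ integrable_halfline_tpow) //.
exact: integral_halfline_tpow_gt0.
Qed.

Lemma Rintegral_sqr_tpow :
  \int[lebesgue]_x (x ^+ 2 * tpow c q x) = c / (2 * q - 3) * \int[lebesgue]_x tpow c q x.
Proof.
rewrite /Rintegral (ge0_symfun_integralT (tpow_ge0 c q) (continuous_tpow c_gt0) tpow_even).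
rewrite (ge0_symfun_integralT sqr_tpow_ge0 (continuous_sqr_tpow c_gt0) sqr_tpow_even).
rewrite -!set_itvcy integral_halfline_tpow.
rewrite -(fineK (integrable_fin_num _ integrable_halfline_sqr_tpow)) // -!EFinM /=.
by field; rewrite !gt_eqF //; move: q_ge2; lra.
Qed.

End tpow_moments.

Section lebesgue_tools.
Variable R : realType.

Lemma integral_lincomb (a b : R) (f g : R -> R) :
  lebesgue.-integrable setT (EFin \o f) -> lebesgue.-integrable setT (EFin \o g) ->
  (\int[lebesgue]_x (a * f x + b * g x)%:E =
   (a * \int[lebesgue]_x f x + b * \int[lebesgue]_x g x)%:E)%E.
Proof.
move=> f_int g_int.
have scale_int (k : R) (h : R -> R) : lebesgue.-integrable setT (EFin \o h) ->
    lebesgue.-integrable setT (EFin \o (fun x => k * h x)).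
  move=> h_int; have : lebesgue.-integrable setT (fun x => k%:E * (h x)%:E)%E.
    exact: integrableZl h_int.
  by apply: eq_integrable => // x _; rewrite /= EFinM.
have integral_scale (k : R) (h : R -> R) : lebesgue.-integrable setT (EFin \o h) ->
    (\int[lebesgue]_x (k * h x)%:E = (k * \int[lebesgue]_x h x)%:E)%E.
  move=> h_int; under eq_integral do rewrite EFinM.
  by rewrite integralZl // EFinM fineK //; exact: integrable_fin_num.
under eq_integral do rewrite EFinD.
by rewrite integralD_EFin ?scale_int // !integral_scale.
Qed.

Lemma ge0_integral_scale (s : R) (G : R -> R) : 0 < s -> continuous G ->
  (forall x, 0 <= G x) ->
  (\int[lebesgue]_x (G x)%:E = \int[lebesgue]_x (G (s * x) * s)%:E)%E.
Proof.
move=> s_gt0 G_cont G_ge0.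
have is_derive_scale (x : R) : is_derive x 1 (fun u : R => s * u) s.
  by apply: is_derive_eq; rewrite /GRing.scale /= mulr1.
have scale_derive1 : (fun u : R => s * u)^`()%classic = cst s.
  apply/funext => x; rewrite derive1E.
  exact: (@derive_val _ _ _ _ _ _ _ (is_derive_scale x)).
rewrite (@increasing_ge0_integration_by_substitutionT _ (fun u => s * u) G); first last.
- by [].
- by [].
- by apply: (gt0_cvgMry s_gt0); exact: cvg_id.
- by apply: (gt0_cvgMrNy s_gt0); exact: cvg_id.
- by move=> x; exact: (@ex_derive _ _ _ _ _ _ _ (is_derive_scale x)).
- by rewrite scale_derive1; exact: is_cvg_cst.
- by rewrite scale_derive1; exact: is_cvg_cst.
- by rewrite scale_derive1; exact: cst_continuous.
- by move=> x y; rewrite ltr_pM2l.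
by rewrite scale_derive1.
Qed.

End lebesgue_tools.

Lemma continuous_V2_tpow (R : realType) (c q k : R) : 0 < c ->
  continuous (fun y => V2 y * tpow c q y * k).
Proof.
move=> c_gt0 x.
apply: (continuousM (s := fun y => V2 y * tpow c q y) (t := cst k)); last exact: cst_continuous.
apply: (continuousM (s := fun y : R => y ^+ 2 + 1) (t := tpow c q)); last exact: continuous_tpow.
by apply/differentiable_continuous/derivable1_diffP; exact: ex_derive.
Qed.

Lemma PV2E (R : realType) (t : nat) (mu : R) : (3 <= t)%N ->
  PV2 t mu = ((t%:R + mu ^+ 2) / (t%:R - 2) + 1)%:E.
Proof.
move=> t_ge3; have t_ge3R : 3 <= t%:R :> R by rewrite (ler_nat R 3 t).
set c : R := t%:R; set q : R := (t%:R + 1) / 2.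
have c_ge1 : 1 <= c by rewrite /c; lra.
have c_gt0 : 0 < c by lra.
have q_ge2 : 2 <= q by rewrite /q; lra.
rewrite /PV2 /kdens /studt_pdf /studt_const.
change (studt_unnorm t) with (tpow c q).
rewrite -[fine _]/(\int[lebesgue]_x tpow c q x); set Z := Rintegral _ _ _.
have Z_gt0 : 0 < Z := Rintegral_tpow_gt0 c_ge1 q_ge2.
set s := kscale t mu.
have s_gt0 : 0 < s by rewrite sqrtr_gt0 (tbase_gt0 c_gt0).
have s2E : s ^+ 2 = tbase c mu by rewrite sqr_sqrtr // ltW // (tbase_gt0 c_gt0).
have cs2_gt0 : 0 < c * s ^+ 2 by rewrite mulr_gt0 // exprn_gt0.
transitivity (\int[lebesgue]_y (V2 y * tpow (c * s ^+ 2) q y * (Z * s)^-1)%:E)%E.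
  apply: eq_integral => y _; rewrite (tpow_divr _ _ _ s_gt0) //.
  by congr EFin; field; rewrite !gt_eqF.
have G_cont := @continuous_V2_tpow R (c * s ^+ 2) q (Z * s)^-1 cs2_gt0.
rewrite (ge0_integral_scale s_gt0 G_cont); last first.
  move=> y; apply: mulr_ge0; last by rewrite invr_ge0 mulr_ge0 // ltW.
  by rewrite mulr_ge0 ?tpow_ge0 // addr_ge0 ?sqr_ge0.
transitivity (\int[lebesgue]_x (s ^+ 2 / Z * (x ^+ 2 * tpow c q x) + Z^-1 * tpow c q x)%:E)%E.
  apply: eq_integral => x _; rewrite -(tpow_divr _ _ _ s_gt0) //.
  rewrite (_ : s * x / s = x); last by rewrite mulrC mulKf ?gt_eqF.
  by congr EFin; rewrite /V2; field; rewrite !gt_eqF.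
rewrite integral_lincomb ?integrable_tpow ?integrable_sqr_tpow //.
rewrite Rintegral_sqr_tpow // -/Z.
by rewrite s2E (tbaseE c_gt0) /q /c; congr EFin; field; rewrite !gt_eqF //; lra.
Qed.

Lemma piV2E (R : realType) (t : nat) : (4 <= t)%N ->
  piV2 R t = ((2 * t%:R - 3) / (t%:R - 3))%:E.
Proof.
move=> t_ge4; have t_ge4R : 4 <= t%:R :> R by rewrite (ler_nat R 4 t).
set c : R := t%:R; set q : R := t%:R / 2.
have c_ge1 : 1 <= c by rewrite /c; lra.
have q_ge2 : 2 <= q by rewrite /q; lra.
rewrite /piV2 /pi_pdf /pi_const.
change (pi_unnorm t) with (tpow c q).
rewrite -[fine _]/(\int[lebesgue]_x tpow c q x); set Z := Rintegral _ _ _.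
have Z_gt0 : 0 < Z := Rintegral_tpow_gt0 c_ge1 q_ge2.
transitivity (\int[lebesgue]_x (Z^-1 * (x ^+ 2 * tpow c q x) + Z^-1 * tpow c q x)%:E)%E.
  by apply: eq_integral => x _; rewrite /V2; congr EFin; ring.
rewrite integral_lincomb ?integrable_tpow ?integrable_sqr_tpow //.
rewrite Rintegral_sqr_tpow // -/Z.
by rewrite /q /c; congr EFin; field; rewrite !gt_eqF //; lra.
Qed.

Lemma drift_ineq (R : realType) (t a m : R) : 2 < t -> 0 <= a <= `|m| ->
  (t + m ^+ 2) / (t - 2) + 1 <= 1 / (t - 2) * ((2 * t - 3) / (1 + a ^+ 2) + 1) * (m ^+ 2 + 1).
Proof.
move=> t_gt2 /andP[a_ge0 a_le_m].
have a2_le_m2 : a ^+ 2 <= m ^+ 2.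
  by rewrite -[m ^+ 2]real_normK ?num_real // ler_sqr ?nnegrE ?normr_ge0.
have a2_gt0 : 0 < 1 + a ^+ 2 by rewrite ltr_pwDl ?sqr_ge0.
rewrite -subr_ge0.
have -> : 1 / (t - 2) * ((2 * t - 3) / (1 + a ^+ 2) + 1) * (m ^+ 2 + 1)
    - ((t + m ^+ 2) / (t - 2) + 1)
    = (2 * t - 3) * (m ^+ 2 - a ^+ 2) / ((1 + a ^+ 2) * (t - 2)).
  by field; rewrite !gt_eqF //; lra.
by rewrite divr_ge0 ?mulr_ge0 ?subr_ge0 // ?ltW //; lra.
Qed.

Lemma small_set_ineq (R : realType) (t a m : R) : 2 < t -> `|m| <= a ->
  (t + m ^+ 2) / (t - 2) + 1 <= 2 + (a ^+ 2 + 2) / (t - 2).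
Proof.
move=> t_gt2 m_le_a.
have m2_le_a2 : m ^+ 2 <= a ^+ 2.
  rewrite -[m ^+ 2]real_normK ?num_real // ler_sqr ?nnegrE ?normr_ge0 //.
  exact: le_trans (normr_ge0 m) m_le_a.
rewrite -subr_ge0.
have -> : 2 + (a ^+ 2 + 2) / (t - 2) - ((t + m ^+ 2) / (t - 2) + 1)
    = (a ^+ 2 - m ^+ 2) / (t - 2) by field; rewrite gt_eqF //; lra.
by rewrite divr_ge0 ?subr_ge0 //; lra.
Qed.

Theorem proposition7p1 (R : realType) (t : nat) (a : R)
  (ht : (4 <= t)%N) (ha : Num.sqrt (t%:R / (t%:R - 3)) < a) :
  let lambda2 := (1 / (t%:R - 2)) * ((2 * t%:R - 3) / (1 + a ^+ 2) + 1) in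
  let K2 := 2 + (a ^+ 2 + 2) / (t%:R - 2) in
  (forall mu : R, a < `|mu| -> (PV2 t mu <= (lambda2 * V2 mu)%:E)%E) /\
  (forall mu : R, `|mu| <= a -> (PV2 t mu <= K2%:E)%E) /\
  piV2 R t = ((2 * t%:R - 3) / (t%:R - 3))%:E.
Proof.
move=> lambda2 K2.
have t_gt2 : 2 < t%:R :> R by rewrite ltr_nat (leq_trans _ ht).
have t_ge3 : (3 <= t)%N by rewrite (leq_trans _ ht).
(* The hypothesis on a is only used through 0 <= a; in the paper it makes lambda2 < 1. *)
have a_ge0 : 0 <= a := le_trans (sqrtr_ge0 _) (ltW ha).
split; [|split]; last exact: piV2E.
- move=> mu a_lt_mu; rewrite PV2E // lee_fin.
  by apply: drift_ineq; rewrite // a_ge0 ltW.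
- by move=> mu mu_le_a; rewrite PV2E // lee_fin; apply: small_set_ineq.
Qed.
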